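(* Let $f : \mathbb{R} \to \mathbb{R}$ and $g : \mathbb{R}^n \to \mathbb{R}$, and let $\bar x \in \mathbb{R}^n$. Let $g_{ave}$ be a concave underestimator of $g$ at $\bar x$, let $f_{ave}$ be a concave underestimator of $f$ at $g(\bar x)$, and let $g^{vex}$ be a convex overestimator of $g$ at $\bar x$. Then \[ h(x) := \min \{ f_{ave}(g_{ave}(x)),\ f_{ave}(g^{vex}(x)) \} \] is a concave underestimator of $x \mapsto f(g(x))$ at $\bar x$.
   Context: For a function $\phi : \mathbb{R}^d \to \mathbb{R}$ and a point $\bar y \in \mathbb{R}^d$, a function $\phi_{ave} : \mathbb{R}^d \to \mathbb{R}$ is a concave underestimator of $\phi$ at $\bar y$ if $\phi_{ave}$ is concave, $\phi_{ave}(y) \le \phi(y)$ for all $y \in \mathbb{R}^d$, and $\phi_{ave}(\bar y) = \phi(\bar y)$. Similarly, $\phi^{vex} : \mathbb{R}^d \to \mathbb{R}$ is a convex overestimator of $\phi$ at $\bar y$ if $\phi^{vex}$ is convex, $\phi^{vex}(y) \ge \phi(y)$ for all $y \in \mathbb{R}^d$, and $\phi^{vex}(\bar y) = \phi(\bar y)$. *)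

From HB Require Import structures.
From mathcomp Require Import all_boot all_order all_algebra.
From mathcomp Require Import all_classical all_reals.
From mathcomp Require Import interval_inference convex.
Set Implicit Arguments. Unset Strict Implicit. Unset Printing Implicit Defensive.
Import Order.TTheory GRing.Theory Num.Theory.
Local Open Scope ring_scope.
Local Open Scope convex_scope.
Local Open Scope classical_set_scope.

Definition concave_function (R : numFieldType) (E : lmodType R)
    (E' := convex_lmodType E) (D : set E') (f : E' -> R^o) :=
  forall (t : {i01 R}),
    {in D &, forall (x y : E'), (f x <| t |> f y <= f (x <| t |> y))%R}.

Definition concave_underestimator (R : numFieldType) (E : lmodType R)
    (phi phi_ave : E -> R) (ybar : E) : Prop :=
  concave_function [set: convex_lmodType E] (phi_ave : convex_lmodType E -> R^o) /\
  (forall y, phi_ave y <= phi y) /\ phi_ave ybar = phi ybar.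

Definition convex_overestimator (R : numFieldType) (E : lmodType R)
    (phi phi_vex : E -> R) (ybar : E) : Prop :=
  convex_function [set: convex_lmodType E] (phi_vex : convex_lmodType E -> R^o) /\
  (forall y, phi y <= phi_vex y) /\ phi_vex ybar = phi ybar.

(* For a concave F : R -> R, min (F l) (F u) is the minimum of F over [l, u].
   This minimum shrinks when the interval grows, and it is concave in the pair
   of endpoints: a point of the interval [l1 <| t |> l2, u1 <| t |> u2] is the
   t-combination of a point of [l1, u1] and a point of [l2, u2] taken at the
   same relative position. Composing with the concave g_ave and the convex
   g_vex, which satisfy g_ave <= g <= g_vex, gives the concavity of h; the
   underestimation comes from g x lying in [g_ave x, g_vex x]. *)
From HB Require Import structures.
From mathcomp Require Import all_boot all_order all_algebra.
From mathcomp Require Import all_classical all_reals.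
From mathcomp Require Import interval_inference convex.
From mathcomp Require Import ring lra.
Import Order.TTheory GRing.Theory Num.Theory.
Local Open Scope ring_scope.
Local Open Scope convex_scope.

Section convex_combinations_on_the_line.
Context {R : realFieldType}.
Implicit Types (a b c d y : R^o) (s t : {i01 R}).

Lemma ler_convR t a b c d : a <= c -> b <= d -> a <| t |> b <= c <| t |> d.
Proof.
move=> ac bd; rewrite !convRE.
have t_ge0 : 0 <= t%:num by [].
have onemt_ge0 : 0 <= 1 - t%:num by rewrite subr_ge0.
by rewrite lerD // ler_wpM2l.
Qed.

Lemma convR_onto_itv {a b y} : a <= y -> y <= b -> exists t, y = a <| t |> b.
Proof.
move=> ay yb; have [a_eq_b|ab] := eqVneq a b.
  by exists 0%:i01; rewrite conv0; apply/eqP; rewrite eq_le yb -a_eq_b ay.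
have ba_gt0 : 0 < b - a by rewrite subr_gt0 lt_neqAle ab (le_trans ay yb).
have t_ge0 : 0 <= (b - y) / (b - a).
  by apply: divr_ge0; [rewrite subr_ge0 | exact: ltW].
have t_le1 : (b - y) / (b - a) <= 1 by rewrite ler_pdivrMr // mul1r; lra.
exists (Itv01 t_ge0 t_le1); rewrite convRE /unstable.onem /=.
by field; rewrite gt_eqF.
Qed.

Lemma convR_ACA s t a b c d :
  (a <| s |> b) <| t |> (c <| s |> d) = (a <| t |> c) <| s |> (b <| t |> d).
Proof. by rewrite !convRE /unstable.onem; ring. Qed.

End convex_combinations_on_the_line.

Section concave_function_on_the_line.
Variables (R : realFieldType) (F : R -> R).
Hypothesis F_concave :
  concave_function [set: convex_lmodType R^o] (F : convex_lmodType R^o -> R^o).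

Lemma concaveR (t : {i01 R}) (a b : R^o) :
  (F a : R^o) <| t |> (F b : R^o) <= F (a <| t |> b).
Proof. exact: F_concave (in_setT _) (in_setT _). Qed.

Lemma concave_min_le {a b y : R} :
  a <= y -> y <= b -> Num.min (F a) (F b) <= F y.
Proof.
move=> ay yb; have [t ->] := convR_onto_itv ay yb.
apply: le_trans (concaveR t a b).
rewrite -(convmm t (Num.min (F a) (F b) : R^o)).
by apply: ler_convR; rewrite ge_min lexx ?orbT.
Qed.

Lemma concave_min_conv_le (t : {i01 R}) {l1 u1 l2 u2 y : R^o} :
  l1 <= u1 -> l2 <= u2 -> l1 <| t |> l2 <= y -> y <= u1 <| t |> u2 ->
  (Num.min (F l1) (F u1) : R^o) <| t |> (Num.min (F l2) (F u2) : R^o) <= F y.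
Proof.
move=> lu1 lu2 ly yu; have [s ->] := convR_onto_itv ly yu.
rewrite convR_ACA; apply: le_trans (concaveR _ _ _).
move: (convR_itv s lu1) (convR_itv s lu2); rewrite !in_itv /=.
by move=> /andP[l1_le u1_ge] /andP[l2_le u2_ge]; apply: ler_convR;
  apply: concave_min_le.
Qed.

End concave_function_on_the_line.

Lemma concave_min_comp (R : realFieldType) (E : lmodType R)
    (F : R -> R) (lo hi : E -> R) :
  concave_function [set: convex_lmodType R^o] (F : convex_lmodType R^o -> R^o) ->
  concave_function [set: convex_lmodType E] (lo : convex_lmodType E -> R^o) ->
  convex_function [set: convex_lmodType E] (hi : convex_lmodType E -> R^o) ->
  (forall x, lo x <= hi x) ->
  concave_function [set: convex_lmodType E]
    ((fun x => Num.min (F (lo x)) (F (hi x))) : convex_lmodType E -> R^o).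
Proof.
move=> F_concave lo_concave hi_convex lo_le_hi t x1 x2 _ _ /=.
set z := x1 <| t |> x2.
have lo_z : (lo x1 : R^o) <| t |> (lo x2 : R^o) <= lo z.
  exact: lo_concave (in_setT _) (in_setT _).
have hi_z : hi z <= (hi x1 : R^o) <| t |> (hi x2 : R^o).
  exact: hi_convex (in_setT _) (in_setT _).
rewrite le_min; apply/andP; split; apply: concave_min_conv_le => //.
- exact: le_trans (lo_le_hi z) hi_z.
- exact: le_trans lo_z (lo_le_hi z).
Qed.

Theorem theorem1 (R : realType) (n : nat)
    (f : R -> R) (g : 'rV[R]_n -> R) (xbar : 'rV[R]_n)
    (g_ave : 'rV[R]_n -> R) (f_ave : R -> R) (g_vex : 'rV[R]_n -> R) :
  concave_underestimator g g_ave xbar ->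
  @concave_underestimator R R^o f f_ave (g xbar) ->
  convex_overestimator g g_vex xbar ->
  concave_underestimator (fun x => f (g x))
    (fun x => Num.min (f_ave (g_ave x)) (f_ave (g_vex x))) xbar.
Proof.
move=> [g_ave_concave [g_ave_le g_ave_xbar]] [f_ave_concave [f_ave_le f_ave_gxbar]]
  [g_vex_convex [g_vex_ge g_vex_xbar]].
have g_ave_le_vex x : g_ave x <= g_vex x := le_trans (g_ave_le x) (g_vex_ge x).
split; last split.
- exact: concave_min_comp.
- move=> x; apply: le_trans (f_ave_le (g x)).
  exact: concave_min_le (g_ave_le x) (g_vex_ge x).
- by rewrite g_ave_xbar g_vex_xbar minxx f_ave_gxbar.
Qed.
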